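(* Let $k\ge2$ be an integer and let $H_k$ be the graph with half-edges obtained from $K_{k,k}$ by deleting one vertex but keeping its $k$ incident edges as half-edges. Let $e\ne e'$ be two half-edges of $H_k$ with end vertices $x$ and $x'$ respectively. Then for every positive integer $q$, $H_k$ admits a $(q(k+1)+1,q)$-total colouring $\gamma$ such that $\gamma(e)=0$, $\gamma(e')=2$, $\gamma(x)=qk+1$ and $\gamma(x')=q+2$.
   Context: A half-edge has exactly one end vertex. For integers $p\ge q\ge1$, a $(p,q)$-total colouring of a graph (possibly with half-edges) is a map $c$ from the set of vertices, edges and half-edges to $\{0,1,\ldots,p-1\}$ such that $q\le|c(a)-c(b)|\le p-q$ whenever $a,b$ are two adjacent vertices, two edges/half-edges sharing an end vertex, or a vertex and an edge or half-edge incident with it. *)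

From mathcomp Require Import all_boot.
Set Implicit Arguments. Unset Strict Implicit. Unset Printing Implicit Defensive.

(* A graph possibly with half-edges: a finite vertex type V, a finite type E
   of edges and half-edges, and for each f : E its set of end vertices
   (two ends for an edge, one end for a half-edge). *)

Definition ndist (a b : nat) : nat := (a - b) + (b - a).

Definition tadj (V E : finType) (ends : E -> {set V}) (a b : V + E) : bool :=
  match a, b with
  | inl u, inl v => (u != v) && [exists f, ends f == [set u; v]]
  | inr f, inr g => (f != g) && (ends f :&: ends g != set0)
  | inl v, inr f => v \in ends f
  | inr f, inl v => v \in ends f
  end.

Definition total_colouring (V E : finType) (ends : E -> {set V})
    (p q : nat) (c : V + E -> nat) : Prop :=
  (forall a, c a < p) /\
  (forall a b, tadj ends a b -> q <= ndist (c a) (c b) <= p - q).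

(* H_k: K_{k,k} with parts A = inl 'I_k and B = inr 'I_k; the vertex inr d
   is deleted, and its k incident edges are kept as half-edges. *)
Definition HkV (k : nat) (d : 'I_k) := {v : 'I_k + 'I_k | v != inr d}.
Definition HkE (k : nat) := ('I_k * 'I_k)%type.
Definition Hk_ends (k : nat) (d : 'I_k) (f : HkE k) : {set HkV d} :=
  [set v : HkV d | (val v == inl f.1) || (val v == inr f.2)].

From mathcomp Require Import all_boot zify fingroup perm.
Set Implicit Arguments. Unset Strict Implicit. Unset Printing Implicit Defensive.

(* Every element gets a slot t in {0..k} and an offset in {0,1,2}, and the
   colour (q t + offset) mod (q(k+1)+1).  Elements in different slots are at
   cyclic distance at least q unless their slots are cyclically consecutive
   and the offsets go the wrong way, which [spaced] rules out.  Number the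
   A-vertices by a permutation with the ends of e and e' labelled 0 and 1, and
   the B-vertices by a permutation labelling the deleted vertex k-1.  The
   A-vertex labelled a sits in slot a (slot k if a = 0), B-vertices and
   half-edges in slot 0, and the edge between labels a and c < k-1 in slot
   (a + c mod k) + 1: a Latin-square edge colouring of K_{k,k} in which no
   edge shares the slot of its A-end, since c + 1 is not 0 mod k. *)

Lemma gap_bounds q k m d d' : 0 < q -> 0 < m <= k -> d <= 2 -> d' <= 2 ->
  (m = 1 -> d <= d') -> (m = k -> d' <= d + 1) -> m + d' <> d ->
  q <= q * m + d' - d <= q * k + 1.
Proof.
move=> hq /andP[hm hmk] hd hd' h1 hk hne.
have qm_ge_m : m <= q * m by rewrite leq_pmull.
have qm_ge_q : q <= q * m by rewrite leq_pmulr.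
have qm_ge_2q : 1 < m -> q + q <= q * m by move=> ?; rewrite addnn -muln2 leq_pmul2l.
have qm_lt_qk : m < k -> q * m + q <= q * k by move=> ?; rewrite -mulnSr leq_pmul2l.
have qm_eq_qk : m = k -> q * m = q * k by move=> ->.
lia.
Qed.

Definition slot_colour (q : nat) (s : nat * nat) : nat := q * s.1 + s.2.

(* The last clause only matters for q = 1, where slots two apart can collide. *)
Definition spaced (k : nat) (s s' : nat * nat) : Prop :=
  s.1 <> s'.1 /\ s.1 <= k /\ s'.1 <= k /\ s.2 <= 2 /\ s'.2 <= 2 /\
  (s'.1 = s.1 + 1 -> s.2 <= s'.2) /\ (s.1 = s'.1 + 1 -> s'.2 <= s.2) /\
  (s'.1 = s.1 + k -> s'.2 <= s.2 + 1) /\ (s.1 = s'.1 + k -> s.2 <= s'.2 + 1) /\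
  s.1 + s.2 <> s'.1 + s'.2.

Lemma spaced_sym k s s' : spaced k s s' -> spaced k s' s.
Proof. rewrite /spaced; lia. Qed.

Lemma spaced_slot_colour q k s s' : 0 < q -> spaced k s s' ->
  q <= ndist (slot_colour q s) (slot_colour q s') <= q * k + 1.
Proof.
move=> hq; wlog lt_ss' : s s' / s.1 < s'.1 => [hwlog hs|].
  have [lt|gt|eq] := ltngtP s.1 s'.1; first exact: hwlog.
    by rewrite /ndist addnC; apply: hwlog gt _; apply: spaced_sym.
  by case: hs.
case: s s' lt_ss' => t d [t' d'] /= /ltnW /subnKC <- hs.
move: (t' - t) hs => m hs.
have := @gap_bounds q k m d d' hq.
rewrite /slot_colour /ndist /= mulnDr; move: hs; rewrite /spaced /=; lia.
Qed.

Lemma ndist_modn p q u v : u <= p -> v <= p -> q <= ndist u v <= p - q ->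
  q <= ndist (u %% p) (v %% p) <= p - q.
Proof.
have mod_le w : w <= p -> w %% p = if w == p then 0 else w.
  by case: eqP => [->|ne le]; rewrite ?modnn // modn_small; lia.
by move=> hu hv; rewrite !mod_le // /ndist; do 2 case: eqP; lia.
Qed.

Definition placement_colour (q k : nat) (s : nat * nat) : nat :=
  slot_colour q s %% (q * (k + 1) + 1).

Lemma spaced_placement_colour q k s s' : 0 < q -> spaced k s s' ->
  q <= ndist (placement_colour q k s) (placement_colour q k s')
    <= q * (k + 1) + 1 - q.
Proof.
move=> hq hs; have qkE : q * (k + 1) = q * k + q by rewrite mulnDr muln1.
have slot_le w : w.1 <= k -> w.2 <= 2 -> slot_colour q w <= q * (k + 1) + 1.
  move=> h1 h2; have : q * w.1 <= q * k by rewrite leq_pmul2l.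
  by rewrite /slot_colour; lia.
have [_ [h1 [h1' [h2 [h2' _]]]]] := hs.
apply: ndist_modn; [exact: slot_le | exact: slot_le |].
by rewrite qkE addnAC addnK; exact: spaced_slot_colour.
Qed.

Definition vertexA_place (k a : nat) : nat * nat :=
  if a == 0 then (k, 1) else (a, 2).
Definition vertexB_place : nat * nat := (0, 1).
Definition half_edge_place (a : nat) : nat * nat :=
  (0, if a == 0 then 0 else if a == 1 then 2 else 1).
Definition edge_slot (k a c : nat) : nat :=
  if a + c < k then a + c + 1 else a + c + 1 - k.
Definition edge_place (k a c : nat) : nat * nat :=
  (edge_slot k a c, if c + 2 <= edge_slot k a c then 2 else 1).

Ltac spaced_arith :=
  move=> *; rewrite /spaced /vertexA_place /vertexB_place /half_edge_place
    /edge_place /edge_slot; repeat case: ifP => ? /=; lia.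

Lemma spaced_vertexA_vertexB k a : a < k -> spaced k (vertexA_place k a) vertexB_place.
Proof. spaced_arith. Qed.

Lemma spaced_vertexA_half_edge k a : a < k ->
  spaced k (vertexA_place k a) (half_edge_place a).
Proof. spaced_arith. Qed.

Lemma spaced_vertexA_edge k a c : a < k -> c < k.-1 ->
  spaced k (vertexA_place k a) (edge_place k a c).
Proof. spaced_arith. Qed.

Lemma spaced_vertexB_edge k a c : a < k -> c < k.-1 ->
  spaced k vertexB_place (edge_place k a c).
Proof. spaced_arith. Qed.

Lemma spaced_half_edge_edge k a c : a < k -> c < k.-1 ->
  spaced k (half_edge_place a) (edge_place k a c).
Proof. spaced_arith. Qed.

Lemma spaced_edges_at_A k a c c' : a < k -> c < k.-1 -> c' < k.-1 -> c <> c' ->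
  spaced k (edge_place k a c) (edge_place k a c').
Proof. spaced_arith. Qed.

Lemma spaced_edges_at_B k a a' c : a < k -> a' < k -> c < k.-1 -> a <> a' ->
  spaced k (edge_place k a c) (edge_place k a' c).
Proof. spaced_arith. Qed.

Section HkPlacement.
Variables (k : nat) (d : 'I_k) (A B : {perm 'I_k}).
Hypothesis B_d : B d = k.-1 :> nat.

Lemma B_lt_pred j : j != d -> B j < k.-1.
Proof.
move=> jd; have : B j != B d by rewrite (inj_eq perm_inj).
by rewrite -val_eqE /= B_d; have := ltn_ord (B j); lia.
Qed.

Definition Hk_place (z : HkV d + HkE k) : nat * nat :=
  match z with
  | inl v => if val v is inl i then vertexA_place k (A i) else vertexB_place
  | inr f => if f.2 == d then half_edge_place (A f.1)
             else edge_place k (A f.1) (B f.2)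
  end.

Lemma Hk_place_spaced_vertices u v : tadj (@Hk_ends k d) (inl u) (inl v) ->
  spaced k (Hk_place (inl u)) (Hk_place (inl v)).
Proof.
rewrite /= => /andP[uv /existsP[f /eqP uv_f]].
have : (u \in Hk_ends d f) && (v \in Hk_ends d f) by rewrite uv_f !inE !eqxx orbT.
clear uv_f; move: uv; rewrite -val_eqE /Hk_ends !inE.
case: u => [[i|j] ?]; case: v => [[i'|j'] ?] //= uv.
- by move=> /andP[/orP[/eqP[ei]|//] /orP[/eqP[ei']|//]]; rewrite ei ei' eqxx in uv.
- by move=> _; apply: spaced_vertexA_vertexB.
- by move=> _; apply/spaced_sym/spaced_vertexA_vertexB.
- by move=> /andP[/eqP[ej] /eqP[ej']]; rewrite ej ej' eqxx in uv.
Qed.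

Lemma Hk_place_spaced_vertex_edge v f : tadj (@Hk_ends k d) (inl v) (inr f) ->
  spaced k (Hk_place (inl v)) (Hk_place (inr f)).
Proof.
rewrite /= /Hk_ends inE; case: v => [[i|j] vd] /=.
  move=> /orP[/eqP[<-]|//]; case: ifP => [_|/negbT fd].
    exact: spaced_vertexA_half_edge.
  exact/spaced_vertexA_edge/B_lt_pred.
move=> /eqP[<-]; case: ifP => [/eqP fd|/negbT fd]; first by rewrite fd eqxx in vd.
exact/spaced_vertexB_edge/B_lt_pred.
Qed.

Lemma Hk_place_spaced_edges f g : tadj (@Hk_ends k d) (inr f) (inr g) ->
  spaced k (Hk_place (inr f)) (Hk_place (inr g)).
Proof.
rewrite /= => /andP[fg /set0Pn[w]]; rewrite !inE /=.
case: f g fg => [f1 f2] [g1 g2] fg; case: w => [[i|j] wd] /=.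
  move=> /andP[/orP[/eqP[ef]|//] /orP[/eqP[eg]|//]]; subst f1 g1.
  have f2g2 : f2 != g2 by apply: contra fg => /eqP->.
  case: ifP => [/eqP f2d|/negbT f2d]; case: ifP => [/eqP g2d|/negbT g2d].
  - by rewrite f2d g2d eqxx in f2g2.
  - exact/spaced_half_edge_edge/B_lt_pred.
  - exact/spaced_sym/spaced_half_edge_edge/B_lt_pred.
  - apply: spaced_edges_at_A; rewrite ?B_lt_pred //.
    by move/val_inj/perm_inj=> f2g2'; rewrite f2g2' eqxx in f2g2.
move=> /andP[/eqP[ef] /eqP[eg]]; subst f2 g2; have jd : j != d by apply: contra wd => /eqP->.
have f1g1 : f1 != g1 by apply: contra fg => /eqP->.
rewrite (negbTE jd); apply: spaced_edges_at_B; rewrite ?B_lt_pred //.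
by move/val_inj/perm_inj=> f1g1'; rewrite f1g1' eqxx in f1g1.
Qed.

Lemma Hk_place_spaced z w : tadj (@Hk_ends k d) z w ->
  spaced k (Hk_place z) (Hk_place w).
Proof.
case: z w => [u|f] [v|g].
- exact: Hk_place_spaced_vertices.
- exact: Hk_place_spaced_vertex_edge.
- by move=> fv; apply/spaced_sym/Hk_place_spaced_vertex_edge.
- exact: Hk_place_spaced_edges.
Qed.

Lemma Hk_place_total_colouring q : 0 < q ->
  total_colouring (@Hk_ends k d) (q * (k + 1) + 1) q
    (fun z => placement_colour q k (Hk_place z)).
Proof.
move=> hq; split=> [z|z w zw]; first by rewrite ltn_pmod // addn1.
exact/spaced_placement_colour/Hk_place_spaced.
Qed.

End HkPlacement.

Lemma Hk_ends_set1 k (d : 'I_k) (e : HkE k) (x : HkV d) :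
  Hk_ends d e = [set x] -> e.2 = d /\ val x = inl e.1.
Proof.
move=> ex.
have end_x (v : 'I_k + 'I_k) (vd : v != inr d) :
    (v == inl e.1) || (v == inr e.2) -> v = val x.
  move=> ve; have : Sub v vd \in Hk_ends d e by rewrite inE SubK.
  by rewrite ex inE => /eqP <-.
have x_e : val x = inl e.1 by rewrite -(@end_x (inl e.1)) ?eqxx.
split=> //; apply/eqP; apply: contraT => e2d.
by have := end_x (inr e.2) e2d; rewrite eqxx orbT x_e => /(_ isT).
Qed.

Lemma perm_of_two (T : finType) (x y x' y' : T) : x != y -> x' != y' ->
  exists s : {perm T}, s x = x' /\ s y = y'.
Proof.
move=> xy x'y'; pose s := tperm x x'.
have sx : s x = x' by exact: tpermL.
have sy : s y != x' by rewrite -sx (inj_eq perm_inj) eq_sym.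
exists (s * tperm (s y) y')%g; rewrite !permM sx tpermL.
by rewrite tpermD // eq_sym.
Qed.

Theorem lemma7 (k : nat) (hk : 2 <= k) (d : 'I_k) (e e' : HkE k)
    (x x' : HkV d)
    (he : Hk_ends d e = [set x]) (he' : Hk_ends d e' = [set x'])
    (hee' : e != e') (q : nat) (hq : 0 < q) :
  exists c : HkV d + HkE k -> nat,
    total_colouring (@Hk_ends k d) (q * (k + 1) + 1) q c /\
    c (inr e) = 0 /\ c (inr e') = 2 /\
    c (inl x) = q * k + 1 /\ c (inl x') = q + 2.
Proof.
have [e2 x_e] := Hk_ends_set1 he; have [e'2 x'_e'] := Hk_ends_set1 he'.
have e1e'1 : e.1 != e'.1.
  apply: contra hee' => /eqP e1; apply/eqP.
  by rewrite [e]surjective_pairing [e']surjective_pairing e1 e2 e'2.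
have [A [A_e A_e']] := perm_of_two e1e'1 (isT : Ordinal (ltnW hk) != Ordinal hk).
have km : k.-1 < k by rewrite ltn_predL ltnW.
pose B := tperm d (Ordinal km).
exists (fun z => placement_colour q k (Hk_place A B z)).
split; first by apply: Hk_place_total_colouring; rewrite // tpermL.
have qk2 : 2 <= q * k by rewrite -[2]mul1n leq_mul.
rewrite /placement_colour /slot_colour /= e2 e'2 x_e x'_e' eqxx A_e A_e' /=.
by rewrite !modn_small ?muln0 ?muln1 //; rewrite mulnDr; lia.
Qed.
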